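(* Let $\Phi(r)=U'(r)/(1+U(r))$ for $r\ge0$. There exist positive numbers $T_-<T_+$ and $\Phi_0$ such that $\Phi$ is an increasing diffeomorphism from $(0,T_-)$ onto $(0,\Phi_0)$, a decreasing diffeomorphism from $(T_+,\infty)$ onto $(0,\Phi_0)$, and $\Phi^{-1}((0,\Phi_0))=(0,T_-)\cup(T_+,\infty)$. Moreover $\Phi(r)\sim\frac{2r}{15\pi}$ as $r\to0$ and $\Phi(r)\sim\frac{1}{r\log r}$ as $r\to\infty$.
   Context: $U(r)=\frac{r^2}{4\pi}\int_0^1\frac{z^2-z^4/3}{1+r^2(1-z^2)/4}dz$ for $r\ge0$. *)

From Stdlib Require Import Reals Lra ClassicalEpsilon.
Open Scope R_scope.

(* Riemann integral of f over [a,b]: the (unique, by RiemannInt_P5) value of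
   RiemannInt pr for any integrability proof pr; an arbitrary value if f is not
   Riemann integrable (never the case below). *)
Definition Rint (f : R -> R) (a b : R) : R :=
  epsilon (inhabits 0)
    (fun I => exists pr : Riemann_integrable f a b, RiemannInt pr = I).

Definition U_integrand (r z : R) : R :=
  (z ^ 2 - z ^ 4 / 3) / (1 + r ^ 2 * (1 - z ^ 2) / 4).

Definition U (r : R) : R := r ^ 2 / (4 * PI) * Rint (U_integrand r) 0 1.

Definition U' (r : R) : R :=
  epsilon (inhabits 0) (fun l => derivable_pt_lim U r l).

Definition Phi (r : R) : R := U' r / (1 + U r).

Definition C1_on (I : R -> Prop) (f : R -> R) : Prop :=
  exists f' : R -> R, forall x, I x -> derivable_pt_lim f x (f' x) /\ continuity_pt f' x.

Definition diffeo_onto (I J : R -> Prop) (f : R -> R) : Prop :=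
  exists g : R -> R,
    (forall x, I x -> J (f x) /\ g (f x) = x) /\
    (forall y, J y -> I (g y) /\ f (g y) = y) /\
    C1_on I f /\ C1_on J g.

Definition strictly_increasing_on (I : R -> Prop) (f : R -> R) : Prop :=
  forall x y, I x -> I y -> x < y -> f x < f y.

Definition strictly_decreasing_on (I : R -> Prop) (f : R -> R) : Prop :=
  forall x y, I x -> I y -> x < y -> f y < f x.

(* Write n(z) = z^2 - z^4/3 and b(z) = (1 - z^2)/4, so that
   4 pi U(r) = V0(r) := int_0^1 n r^2 / (1 + b r^2) dz and Phi = V0' / (4 pi + V0).
   The r-derivatives of the integrand are bounded locally uniformly in z, so V0 can be
   differentiated twice under the integral sign: Phi is C^1, Phi(0) = 0 and
   Phi'(0) = V0''(0) / (4 pi) = 2 / (15 pi), which gives the increasing branch and the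
   behaviour at 0.  For r > 0 the integral has a closed form in terms of arsinh(r/2);
   it gives Phi' < 0 for r >= 5 and Phi(r) r log r -> 1.  A positive function vanishing
   at 0 and at infinity, increasing near 0 and decreasing near infinity, has level sets
   of the stated shape below its minimum on the middle segment, and the strict
   monotonicity of each branch, with a nonvanishing derivative, makes it a
   diffeomorphism. *)

From Stdlib Require Import Reals Psatz Lra ClassicalEpsilon FunctionalExtensionality Ranalysis5.
From Coquelicot Require Import Coquelicot.
Open Scope R_scope.

Lemma Rmult_lt_of_lt_div_succ C t eps :
  0 <= C -> 0 <= t -> t < eps / (C + 1) -> C * t < eps.
Proof.
  intros HC Ht Hteps. apply (Rmult_lt_compat_r (C + 1)) in Hteps; [|lra].
  unfold Rdiv in Hteps. rewrite Rmult_assoc, Rinv_l, Rmult_1_r in Hteps by lra. nra.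
Qed.

Lemma Rabs_div_lt_of_sqr_bound X h C eps :
  0 <= C -> h <> 0 -> Rabs X <= C * h ^ 2 -> Rabs h < eps / (C + 1) ->
  Rabs (X / h) < eps.
Proof.
  intros HC Hh HX Hheps.
  assert (Hah : 0 < Rabs h) by (apply Rabs_pos_lt; exact Hh).
  pose proof (Rmult_lt_of_lt_div_succ C (Rabs h) eps HC (Rabs_pos h) Hheps) as Heps.
  rewrite Rabs_div by exact Hh.
  apply Rle_lt_trans with (2 := Heps).
  apply Rmult_le_reg_r with (Rabs h); [exact Hah|].
  unfold Rdiv. rewrite Rmult_assoc, Rinv_l, Rmult_1_r by lra.
  rewrite <- (pow2_abs h) in HX. lra.
Qed.

Lemma Rabs_div_le_of_ge_1 X Y B : Rabs X <= B -> 1 <= Y -> Rabs (X / Y) <= B.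
Proof.
  intros HX HY. rewrite Rabs_div, (Rabs_right Y) by lra.
  apply Rle_trans with (2 := HX). unfold Rdiv.
  rewrite <- (Rmult_1_r (Rabs X)) at 2. apply Rmult_le_compat_l; [apply Rabs_pos|].
  rewrite <- Rinv_1. apply Rinv_le_contravar; lra.
Qed.

Lemma Rdiv_le_of_le_mul x y c : 0 < c -> x <= y * c -> x / c <= y.
Proof.
  intros Hc H. apply Rmult_le_reg_r with c; [exact Hc|].
  unfold Rdiv. rewrite Rmult_assoc, Rinv_l, Rmult_1_r by lra. exact H.
Qed.

Lemma Rle_div_of_mul_le x y c : 0 < c -> y * c <= x -> y <= x / c.
Proof.
  intros Hc H. apply Rmult_le_reg_r with c; [exact Hc|].
  unfold Rdiv. rewrite Rmult_assoc, Rinv_l, Rmult_1_r by lra. exact H.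
Qed.

Lemma ln_lt_id x : 0 < x -> ln x < x.
Proof.
  intro Hx. rewrite <- (ln_exp x) at 2. apply ln_increasing; [exact Hx|].
  pose proof (exp_ineq1 x (Rgt_not_eq x 0 Hx)). lra.
Qed.

Lemma one_plus_sqr_le_near r r0 : Rabs (r - r0) <= 1 -> 1 + r ^ 2 <= 1 + (Rabs r0 + 1) ^ 2.
Proof.
  intro Hr.
  assert (Rabs r <= Rabs r0 + 1).
  { pose proof (Rabs_triang (r - r0) r0). replace (r - r0 + r0) with r in H by ring. lra. }
  rewrite <- (pow2_abs r). pose proof (Rabs_pos r). nra.
Qed.

Lemma Rabs_sub_le_of_deriv_bound (f f' : R -> R) x0 d K :
  (forall x, Rabs (x - x0) <= d -> derivable_pt_lim f x (f' x)) ->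
  (forall x, Rabs (x - x0) <= d -> Rabs (f' x) <= K) ->
  forall x, Rabs (x - x0) <= d -> Rabs (f x - f x0) <= K * Rabs (x - x0).
Proof.
  intros Hf HK x Hx.
  assert (Hbetween : forall c, Rmin x0 x <= c <= Rmax x0 x -> Rabs (c - x0) <= Rabs (x - x0)).
  { intros c Hc. unfold Rmin, Rmax in Hc. destruct (Rle_dec x0 x);
      [rewrite !Rabs_right by lra| rewrite !Rabs_left1 by lra]; lra. }
  destruct (MVT_abs f f' x0 x) as [c [-> Hc]].
  - intros c Hc. apply Hf. pose proof (Hbetween c Hc). lra.
  - apply Rmult_le_compat_r; [apply Rabs_pos|]. apply HK. pose proof (Hbetween c Hc). lra.
Qed.

Lemma Rabs_taylor1_le (f f' : R -> R) x0 d K : 0 <= K ->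
  (forall x, Rabs (x - x0) <= d -> derivable_pt_lim f x (f' x)) ->
  (forall x, Rabs (x - x0) <= d -> Rabs (f' x - f' x0) <= K * Rabs (x - x0)) ->
  forall x, Rabs (x - x0) <= d -> Rabs (f x - f x0 - (x - x0) * f' x0) <= K * (x - x0) ^ 2.
Proof.
  intros HK Hf Hf' x Hx.
  replace (f x - f x0 - (x - x0) * f' x0)
    with ((f x - x * f' x0) - (f x0 - x0 * f' x0)) by ring.
  replace (K * (x - x0) ^ 2) with (K * Rabs (x - x0) * Rabs (x - x0))
    by (rewrite <- (pow2_abs (x - x0)); ring).
  apply (Rabs_sub_le_of_deriv_bound (fun t => f t - t * f' x0) (fun t => f' t - f' x0)
           x0 (Rabs (x - x0))); [| |lra].
  - intros t Ht. replace (f' t - f' x0) with (f' t - 1 * f' x0) by ring.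
    apply (derivable_pt_lim_minus f (fun t => t * f' x0)); [apply Hf; lra|].
    exact (derivable_pt_lim_scal_right id t 1 (f' x0) (derivable_pt_lim_id t)).
  - intros t Ht. apply Rle_trans with (1 := Hf' t ltac:(lra)). now apply Rmult_le_compat_l.
Qed.

Definition continuous_on_segment (a b : R) (f : R -> R) : Prop :=
  forall x, a <= x <= b -> continuity_pt f x.

Section Segment_integral.
Context {a b : R} (Hab : a <= b).

Lemma Rint_RiemannInt f (pr : Riemann_integrable f a b) : Rint f a b = RiemannInt pr.
Proof.
  unfold Rint.
  destruct (epsilon_spec (inhabits 0)
              (fun I => exists pr : Riemann_integrable f a b, RiemannInt pr = I)
              (ex_intro _ _ (ex_intro _ pr eq_refl))) as [pr' <-].
  apply RiemannInt_P5.
Qed.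

Lemma Riemann_integrable_continuous f :
  continuous_on_segment a b f -> Riemann_integrable f a b.
Proof. exact (@continuity_implies_RiemannInt f a b Hab). Qed.

Lemma continuous_on_segment_plus_scal f g l :
  continuous_on_segment a b f -> continuous_on_segment a b g ->
  continuous_on_segment a b (fun x => f x + l * g x).
Proof.
  intros Hf Hg x Hx.
  apply continuity_pt_plus; [exact (Hf x Hx)|].
  apply (continuity_pt_scal g); exact (Hg x Hx).
Qed.

Lemma Rint_plus_scal f g l :
  continuous_on_segment a b f -> continuous_on_segment a b g ->
  Rint (fun x => f x + l * g x) a b = Rint f a b + l * Rint g a b.
Proof.
  intros Hf Hg.
  rewrite (Rint_RiemannInt _ (Riemann_integrable_continuous _ Hf)),
    (Rint_RiemannInt _ (Riemann_integrable_continuous _ Hg)),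
    (Rint_RiemannInt _ (Riemann_integrable_continuous _
                          (continuous_on_segment_plus_scal f g l Hf Hg))).
  apply RiemannInt_P13.
Qed.

Lemma Rint_ext f g :
  continuous_on_segment a b f -> (forall x, a <= x <= b -> f x = g x) ->
  Rint f a b = Rint g a b.
Proof.
  intros Hf Efg.
  pose proof (Riemann_integrable_continuous _ Hf) as prf.
  assert (prg : Riemann_integrable g a b).
  { apply (Riemann_integrable_ext f g a b); [|exact prf].
    rewrite Rmin_left, Rmax_right by exact Hab. exact Efg. }
  rewrite (Rint_RiemannInt _ prf), (Rint_RiemannInt _ prg).
  apply RiemannInt_P18; [exact Hab|]. intros x Hx; apply Efg; lra.
Qed.

Lemma continuous_on_segment_const c : continuous_on_segment a b (fun _ => c).
Proof. intros x _. apply continuity_pt_const. intros ? ?; reflexivity. Qed.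

Lemma Rint_const c : Rint (fun _ => c) a b = c * (b - a).
Proof.
  rewrite (Rint_RiemannInt _ (Riemann_integrable_continuous _
                                (continuous_on_segment_const c))).
  apply RiemannInt_P15.
Qed.

Lemma Rint_scal f k :
  continuous_on_segment a b f -> Rint (fun x => k * f x) a b = k * Rint f a b.
Proof.
  intro Hf.
  rewrite <- (Rint_ext (fun x => 0 + k * f x)).
  - rewrite Rint_plus_scal, Rint_const; [ring| apply continuous_on_segment_const| exact Hf].
  - apply continuous_on_segment_plus_scal; [apply continuous_on_segment_const| exact Hf].
  - intros; ring.
Qed.

Lemma Rint_le f g :
  continuous_on_segment a b f -> continuous_on_segment a b g ->
  (forall x, a <= x <= b -> f x <= g x) -> Rint f a b <= Rint g a b.
Proof.
  intros Hf Hg Hfg.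
  rewrite (Rint_RiemannInt _ (Riemann_integrable_continuous _ Hf)),
    (Rint_RiemannInt _ (Riemann_integrable_continuous _ Hg)).
  apply RiemannInt_P19; [exact Hab|]. intros; apply Hfg; lra.
Qed.

Lemma Rint_abs_le f M :
  continuous_on_segment a b f -> (forall x, a <= x <= b -> Rabs (f x) <= M) ->
  Rabs (Rint f a b) <= M * (b - a).
Proof.
  intros Hf HM.
  pose proof (Riemann_integrable_continuous _ Hf) as pr.
  pose proof (RiemannInt_P16 pr) as pr_abs.
  rewrite (Rint_RiemannInt _ pr).
  apply Rle_trans with (1 := RiemannInt_P17 pr pr_abs Hab).
  refine (proj2 (@RiemannInt_const_bound _ a b (-M) M pr_abs Hab _)).
  intros x Hx. pose proof (HM x ltac:(lra)). pose proof (Rabs_pos (f x)). lra.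
Qed.

Lemma Rint_FTC f F :
  continuous_on_segment a b f ->
  (forall x, a <= x <= b -> derivable_pt_lim F x (f x)) ->
  Rint f a b = F b - F a.
Proof.
  intros Hf HF.
  assert (HA : antiderivative f F a b).
  { split; [|exact Hab]. intros x Hx. exists (exist _ (f x) (HF x Hx)). reflexivity. }
  destruct (antiderivative_Ucte _ _ _ _ _ HA (RiemannInt_P29 Hab Hf)) as [c Hc].
  rewrite (Rint_RiemannInt _ (Riemann_integrable_continuous _ Hf)),
    (RiemannInt_P20 Hab (FTC_P1 Hab Hf)), (Hc a), (Hc b) by lra.
  ring.
Qed.

Lemma continuous_on_segment_minus f g :
  continuous_on_segment a b f -> continuous_on_segment a b g ->
  continuous_on_segment a b (fun x => f x - g x).
Proof. intros Hf Hg x Hx. apply continuity_pt_minus; [exact (Hf x Hx)| exact (Hg x Hx)]. Qed.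

Lemma Rint_minus f g :
  continuous_on_segment a b f -> continuous_on_segment a b g ->
  Rint (fun x => f x - g x) a b = Rint f a b - Rint g a b.
Proof.
  intros Hf Hg.
  rewrite <- (Rint_ext (fun x => f x + -1 * g x)).
  - rewrite Rint_plus_scal by assumption. ring.
  - apply continuous_on_segment_plus_scal; assumption.
  - intros; ring.
Qed.

Lemma derivable_pt_lim_Rint_param (F F' : R -> R -> R) r0 d K :
  0 < d -> 0 <= K ->
  (forall r, continuous_on_segment a b (F r)) ->
  (forall r, continuous_on_segment a b (F' r)) ->
  (forall z, a <= z <= b -> forall r, Rabs (r - r0) <= d ->
     derivable_pt_lim (fun t => F t z) r (F' r z)) ->
  (forall z, a <= z <= b -> forall r, Rabs (r - r0) <= d ->
     Rabs (F' r z - F' r0 z) <= K * Rabs (r - r0)) ->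
  derivable_pt_lim (fun r => Rint (F r) a b) r0 (Rint (F' r0) a b).
Proof.
  intros Hd HK HF HF' HdF HLip eps Heps.
  assert (HC : 0 <= K * (b - a)) by nra.
  assert (Hdelta : 0 < Rmin d (eps / (K * (b - a) + 1))).
  { apply Rmin_glb_lt; [exact Hd|]. apply Rdiv_lt_0_compat; lra. }
  exists (mkposreal _ Hdelta). intros h Hh0 Hh. simpl in Hh.
  pose proof (Rmin_l d (eps / (K * (b - a) + 1))).
  pose proof (Rmin_r d (eps / (K * (b - a) + 1))).
  set (G := fun z => (F (r0 + h) z - F r0 z) + (- h) * F' r0 z).
  assert (HG : Rint G a b = Rint (F (r0 + h)) a b - Rint (F r0) a b - h * Rint (F' r0) a b).
  { unfold G. rewrite Rint_plus_scal, Rint_minus by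
      (try apply continuous_on_segment_minus; auto). ring. }
  replace ((Rint (F (r0 + h)) a b - Rint (F r0) a b) / h - Rint (F' r0) a b)
    with (Rint G a b / h) by (rewrite HG; field; exact Hh0).
  apply (Rabs_div_lt_of_sqr_bound _ _ (K * (b - a))); [exact HC| exact Hh0| | lra].
  replace (K * (b - a) * h ^ 2) with ((K * h ^ 2) * (b - a)) by ring.
  apply Rint_abs_le.
  - unfold G. apply continuous_on_segment_plus_scal; [apply continuous_on_segment_minus|]; auto.
  - intros z Hz. unfold G.
    replace (F (r0 + h) z - F r0 z + - h * F' r0 z)
      with (F (r0 + h) z - F r0 z - (r0 + h - r0) * F' r0 z) by ring.
    replace (h ^ 2) with ((r0 + h - r0) ^ 2) by ring.
    apply (Rabs_taylor1_le (fun t => F t z) (fun t => F' t z) r0 d K HK);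
      [apply HdF, Hz| apply HLip, Hz|].
    replace (r0 + h - r0) with h by ring. lra.
Qed.

Lemma continuity_pt_Rint_param (F : R -> R -> R) r0 d K :
  0 < d -> 0 <= K ->
  (forall r, continuous_on_segment a b (F r)) ->
  (forall z, a <= z <= b -> forall r, Rabs (r - r0) <= d ->
     Rabs (F r z - F r0 z) <= K * Rabs (r - r0)) ->
  continuity_pt (fun r => Rint (F r) a b) r0.
Proof.
  intros Hd HK HF HLip eps Heps.
  assert (HC : 0 <= K * (b - a)) by nra.
  exists (Rmin d (eps / (K * (b - a) + 1))). split.
  { apply Rmin_glb_lt; [exact Hd|]. apply Rdiv_lt_0_compat; lra. }
  intros r [_ Hr]. simpl in Hr |- *. unfold Rdist in Hr |- *.
  pose proof (Rmin_l d (eps / (K * (b - a) + 1))).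
  pose proof (Rmin_r d (eps / (K * (b - a) + 1))).
  rewrite <- Rint_minus by auto.
  apply Rle_lt_trans with (K * Rabs (r - r0) * (b - a)).
  - apply Rint_abs_le; [apply continuous_on_segment_minus; auto|].
    intros z Hz. apply HLip; [exact Hz| lra].
  - rewrite Rmult_assoc, (Rmult_comm (Rabs (r - r0))), <- Rmult_assoc.
    apply Rmult_lt_of_lt_div_succ; [exact HC| apply Rabs_pos| lra].
Qed.

End Segment_integral.

Lemma strictly_increasing_on_segment f f' a b :
  (forall x, a <= x <= b -> derivable_pt_lim f x (f' x) /\ 0 < f' x) ->
  strictly_increasing_on (fun x => a <= x <= b) f.
Proof.
  intros Hf x y Hx Hy Hxy.
  destruct (MVT_cor2 f f' x y Hxy) as [c [Hc Hcxy]].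
  - intros c Hc. apply Hf. lra.
  - assert (0 < f' c) by (apply Hf; lra). nra.
Qed.

Lemma strictly_decreasing_on_half_line f f' a :
  (forall x, a <= x -> derivable_pt_lim f x (f' x) /\ f' x < 0) ->
  strictly_decreasing_on (fun x => a <= x) f.
Proof.
  intros Hf x y Hx Hy Hxy.
  destruct (MVT_cor2 f f' x y Hxy) as [c [Hc Hcxy]].
  - intros c Hc. apply Hf. lra.
  - assert (f' c < 0) by (apply Hf; lra). nra.
Qed.

Lemma IVT_strict f a b y :
  continuity f -> a < b -> (f a - y) * (f b - y) < 0 -> exists x, a < x < b /\ f x = y.
Proof.
  intros Hf Hab Hy.
  destruct (IVT_cor (fun r => f r - y) a b) as [x [Hx Hfx]].
  - intro r. apply continuity_pt_minus; [apply Hf| apply continuity_pt_const; intros ? ?; reflexivity].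
  - lra.
  - lra.
  - exists x. split; [|lra].
    destruct (Req_dec x a) as [->|]; [nra|]. destruct (Req_dec x b) as [->|]; [nra| lra].
Qed.

(* With k := g (y + h) - g y, the difference quotient h / k of f at g y tends to l. *)
Lemma derivable_pt_lim_local_inverse f g y l :
  continuity_pt g y ->
  (exists e, 0 < e /\ forall y', Rabs (y' - y) < e -> f (g y') = y') ->
  derivable_pt_lim f (g y) l -> l <> 0 ->
  derivable_pt_lim g y (/ l).
Proof.
  intros Hg [e [He Hfg]] Hf Hl eps Heps.
  assert (Hal : 0 < Rabs l) by (apply Rabs_pos_lt; exact Hl).
  set (eta := Rmin (Rabs l / 2) (eps * Rabs l ^ 2 / 2)).
  assert (Heta : 0 < eta).
  { apply Rmin_glb_lt; [lra|]. pose proof (pow_lt _ 2 Hal). nra. }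
  pose proof (Rmin_l (Rabs l / 2) (eps * Rabs l ^ 2 / 2)) as Heta_l.
  pose proof (Rmin_r (Rabs l / 2) (eps * Rabs l ^ 2 / 2)) as Heta_r.
  fold eta in Heta_l, Heta_r.
  destruct (Hf eta Heta) as [d1 Hd1].
  destruct (Hg d1 (cond_pos d1)) as [d2 [Hd2 Hgd2]].
  assert (Hd : 0 < Rmin d2 e) by (apply Rmin_glb_lt; lra).
  exists (mkposreal _ Hd). intros h Hh0 Hh. simpl in Hh.
  pose proof (Rmin_l d2 e). pose proof (Rmin_r d2 e).
  set (k := g (y + h) - g y).
  assert (Hfy : f (g y) = y) by (apply Hfg; rewrite Rminus_diag, Rabs_R0; lra).
  assert (Hfyh : f (g y + k) = y + h).
  { unfold k. replace (g y + (g (y + h) - g y)) with (g (y + h)) by ring.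
    apply Hfg. replace (y + h - y) with h by ring. lra. }
  assert (Hk0 : k <> 0) by (intro Hk; rewrite Hk, Rplus_0_r, Hfy in Hfyh; lra).
  assert (Hk : Rabs k < d1).
  { apply (Hgd2 (y + h)). split; [split; [exact I| lra]|].
    simpl. unfold Rdist. replace (y + h - y) with h by ring. lra. }
  specialize (Hd1 k Hk0 Hk). rewrite Hfyh, Hfy in Hd1.
  replace (y + h - y) with h in Hd1 by ring.
  set (w := h / k) in Hd1.
  assert (Hwl : Rabs l / 2 < Rabs w).
  { pose proof (Rabs_triang_inv l w). rewrite Rabs_minus_sym in Hd1. lra. }
  assert (Hw0 : w <> 0) by (intro Hw0; rewrite Hw0, Rabs_R0 in Hwl; lra).
  replace (k / h - / l) with ((l - w) / (w * l)) by (unfold w; field; auto).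
  rewrite Rabs_div, Rabs_mult, Rabs_minus_sym by (apply Rmult_integral_contrapositive; auto).
  apply Rmult_lt_reg_r with (Rabs w * Rabs l); [nra|].
  unfold Rdiv. rewrite Rmult_assoc, Rinv_l by nra.
  simpl in Heta_r. nra.
Qed.

Lemma continuity_pt_left_inverse_incr f g I x0 :
  open_set I -> I x0 ->
  (forall x, I x -> continuity_pt f x) -> strictly_increasing_on I f ->
  (forall x, I x -> g (f x) = x) ->
  continuity_pt g (f x0).
Proof.
  intros HI Hx0 Hf Hincr Hgf.
  destruct (HI x0 Hx0) as [d Hd].
  assert (Hball : forall x, x0 - d / 2 <= x <= x0 + d / 2 -> I x).
  { intros x Hx. apply Hd. unfold disc. apply Rabs_def1; pose proof (cond_pos d); lra. }
  pose proof (cond_pos d).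
  apply (continuity_pt_recip_prelim f g (x0 - d / 2) (x0 + d / 2)).
  - lra.
  - intros x y Hx Hxy Hy. apply Hincr; [apply Hball; lra| apply Hball; lra| exact Hxy].
  - intros x Hx. apply Hgf, Hball, Hx.
  - intros x Hx. apply Hf, Hball, Hx.
  - split; (apply Hincr; [apply Hball; lra| apply Hball; lra| lra]).
Qed.

Lemma continuity_pt_left_inverse_decr f g I x0 :
  open_set I -> I x0 ->
  (forall x, I x -> continuity_pt f x) -> strictly_decreasing_on I f ->
  (forall x, I x -> g (f x) = x) ->
  continuity_pt g (f x0).
Proof.
  intros HI Hx0 Hf Hdecr Hgf.
  assert (Hopp : continuity_pt (fun y => g (- y)) (- f x0)).
  { apply (continuity_pt_left_inverse_incr (fun x => - f x) _ I); auto.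
    - intros x Hx. apply continuity_pt_opp, Hf, Hx.
    - intros x y Hx Hy Hxy. pose proof (Hdecr x y Hx Hy Hxy). lra.
    - intros x Hx. rewrite Ropp_involutive. apply Hgf, Hx. }
  replace g with (comp (fun y => g (- y)) (fun y => - y))
    by (apply functional_extensionality; intro y; unfold comp; rewrite Ropp_involutive; reflexivity).
  apply continuity_pt_comp; [|exact Hopp].
  apply continuity_pt_opp, derivable_continuous_pt, derivable_pt_id.
Qed.

Lemma open_set_interval a b : open_set (fun x => a < x < b).
Proof.
  intros x Hx. assert (Hd : 0 < Rmin (x - a) (b - x)) by (apply Rmin_glb_lt; lra).
  exists (mkposreal _ Hd).
  intros y Hy. unfold disc in Hy. simpl in Hy. apply Rabs_def2 in Hy.
  pose proof (Rmin_l (x - a) (b - x)). pose proof (Rmin_r (x - a) (b - x)). lra.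
Qed.

Lemma open_set_half_line a : open_set (fun x => a < x).
Proof.
  intros x Hx. assert (Hd : 0 < x - a) by lra. exists (mkposreal _ Hd).
  intros y Hy. unfold disc in Hy. simpl in Hy. apply Rabs_def2 in Hy. lra.
Qed.

Lemma diffeo_onto_of_strictly_monotone I J f f' :
  open_set I -> open_set J ->
  (forall x, I x -> derivable_pt_lim f x (f' x) /\ continuity_pt f' x /\ f' x <> 0) ->
  strictly_increasing_on I f \/ strictly_decreasing_on I f ->
  (forall x, I x -> J (f x)) ->
  (forall y, J y -> exists x, I x /\ f x = y) ->
  diffeo_onto I J f.
Proof.
  intros HI HJ Hf Hmono Hinto Honto.
  assert (Hinj : forall x1 x2, I x1 -> I x2 -> f x1 = f x2 -> x1 = x2).
  { intros x1 x2 H1 H2 E.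
    destruct (total_order_T x1 x2) as [[Hlt|]|Hgt]; [|assumption|];
      destruct Hmono as [Hm|Hm];
      [pose proof (Hm _ _ H1 H2 Hlt)| pose proof (Hm _ _ H1 H2 Hlt)|
       pose proof (Hm _ _ H2 H1 Hgt)| pose proof (Hm _ _ H2 H1 Hgt)]; lra. }
  set (g := fun y => epsilon (inhabits 0) (fun x => I x /\ f x = y)).
  assert (Hfg : forall y, J y -> I (g y) /\ f (g y) = y)
    by (intros y Hy; exact (epsilon_spec _ (fun x => I x /\ f x = y) (Honto y Hy))).
  assert (Hgf : forall x, I x -> g (f x) = x).
  { intros x Hx. destruct (Hfg (f x) (Hinto x Hx)) as [Hgx E]. exact (Hinj _ _ Hgx Hx E). }
  assert (Hcf : forall x, I x -> continuity_pt f x)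
    by (intros x Hx; apply derivable_continuous_pt; exists (f' x); apply Hf, Hx).
  assert (Hcg : forall y, J y -> continuity_pt g y).
  { intros y Hy. destruct (Hfg y Hy) as [Hgy <-].
    destruct Hmono as [Hm|Hm];
      [exact (continuity_pt_left_inverse_incr f g I (g y) HI Hgy Hcf Hm Hgf)|
       exact (continuity_pt_left_inverse_decr f g I (g y) HI Hgy Hcf Hm Hgf)]. }
  exists g. split; [|split; [exact Hfg|split]].
  - intros x Hx. split; [apply Hinto, Hx| apply Hgf, Hx].
  - exists f'. intros x Hx. split; apply Hf, Hx.
  - exists (fun y => / f' (g y)). intros y Hy.
    destruct (Hfg y Hy) as [Hgy _]. destruct (Hf (g y) Hgy) as [Hd [Hc Hnz]].
    split.
    + apply (derivable_pt_lim_local_inverse f); [exact (Hcg y Hy)| |exact Hd| exact Hnz].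
      destruct (HJ y Hy) as [e He]. exists e. split; [apply cond_pos|].
      intros y' Hy'. apply Hfg, He, Hy'.
    + apply (continuity_pt_inv (fun y => f' (g y))); [|exact Hnz].
      exact (continuity_pt_comp g f' y (Hcg y Hy) Hc).
Qed.

Section Hump.

Variables (f : R -> R) (a b : R).
Hypotheses (Hab : 0 < a < b) (Hf : continuity f) (Hf0 : f 0 = 0)
  (Hpos : forall x, 0 < x -> 0 < f x)
  (Hincr : strictly_increasing_on (fun x => 0 <= x <= a) f)
  (Hdecr : strictly_decreasing_on (fun x => b <= x) f)
  (Hvanish : forall y T, 0 < y -> exists x, T < x /\ f x < y).

(* The level m is the minimum of f on [a, b]. *)
Lemma hump_level_sets : exists Tm Tp m,
  0 < Tm <= a /\ b <= Tp /\ 0 < m /\ f Tm = m /\ f Tp = m /\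
  forall r, 0 <= r -> (0 < f r < m <-> 0 < r < Tm \/ Tp < r).
Proof.
  destruct (continuity_ab_min f a b ltac:(lra) (fun x _ => Hf x)) as [xm [Hmin Hxm]].
  set (m := f xm) in *.
  assert (Hm : 0 < m) by (apply Hpos; lra).
  assert (Hma : m <= f a) by (apply Hmin; lra).
  assert (Hmb : m <= f b) by (apply Hmin; lra).
  destruct (IVT_cor (fun r => f r - m) 0 a) as [Tm [HTm HfTm]].
  { intro r. apply continuity_pt_minus; [apply Hf| apply continuity_pt_const; intros ? ?; reflexivity]. }
  { lra. }
  { rewrite Hf0. nra. }
  destruct (Hvanish m b Hm) as [R [HbR HfR]].
  destruct (IVT_cor (fun r => f r - m) b R) as [Tp [HTp HfTp]].
  { intro r. apply continuity_pt_minus; [apply Hf| apply continuity_pt_const; intros ? ?; reflexivity]. }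
  { lra. }
  { nra. }
  assert (HTm0 : Tm <> 0) by (intros ->; rewrite Hf0 in HfTm; lra).
  exists Tm, Tp, m. do 5 (split; [lra|]).
  intros r Hr. split.
  - intros [Hr0 Hrm].
    destruct (Req_dec r 0) as [->|]; [lra|].
    destruct (Rlt_le_dec r Tm); [left; lra|].
    destruct (Rlt_le_dec Tp r); [right; lra|].
    exfalso.
    destruct (Rle_lt_dec r a).
    + destruct (Req_dec r Tm) as [->|]; [lra|].
      pose proof (Hincr Tm r ltac:(lra) ltac:(lra) ltac:(lra)). lra.
    + destruct (Rle_lt_dec r b).
      * pose proof (Hmin r ltac:(lra)). lra.
      * destruct (Req_dec r Tp) as [->|]; [lra|].
        pose proof (Hdecr r Tp ltac:(lra) ltac:(lra) ltac:(lra)). lra.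
  - intros [Hr'|Hr']; (split; [apply Hpos; lra|]).
    + pose proof (Hincr r Tm ltac:(lra) ltac:(lra) ltac:(lra)). lra.
    + pose proof (Hdecr Tp r ltac:(lra) ltac:(lra) ltac:(lra)). lra.
Qed.

Lemma hump_onto_initial Tm y : 0 < Tm -> 0 < y < f Tm -> exists x, 0 < x < Tm /\ f x = y.
Proof. intros HTm Hy. apply IVT_strict; [exact Hf| exact HTm| rewrite Hf0; nra]. Qed.

Lemma hump_onto_tail Tp y : 0 < y < f Tp -> exists x, Tp < x /\ f x = y.
Proof.
  intros Hy. destruct (Hvanish y Tp ltac:(lra)) as [R [HR HfR]].
  destruct (IVT_strict f Tp R y Hf HR ltac:(nra)) as [x [Hx Hfx]].
  exists x. split; [lra| exact Hfx].
Qed.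

End Hump.

Section Smooth_hump.

Variables (f f' : R -> R) (a b : R).
Hypotheses (Hab : 0 < a < b)
  (Hf : forall x, derivable_pt_lim f x (f' x)) (Hf' : continuity f') (Hf0 : f 0 = 0)
  (Hpos : forall x, 0 < x -> 0 < f x)
  (Hf'_pos : forall x, 0 <= x <= a -> 0 < f' x)
  (Hf'_neg : forall x, b <= x -> f' x < 0)
  (Hvanish : forall y T, 0 < y -> exists x, T < x /\ f x < y).

Lemma smooth_hump_shape : exists Tm Tp m,
  0 < Tm /\ Tm < Tp /\ 0 < m /\
  strictly_increasing_on (fun r => 0 < r < Tm) f /\
  diffeo_onto (fun r => 0 < r < Tm) (fun y => 0 < y < m) f /\
  strictly_decreasing_on (fun r => Tp < r) f /\
  diffeo_onto (fun r => Tp < r) (fun y => 0 < y < m) f /\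
  (forall r, 0 <= r -> (0 < f r < m <-> (0 < r < Tm \/ Tp < r))).
Proof.
  assert (Hcont : continuity f)
    by (intro x; apply derivable_continuous_pt; exists (f' x); apply Hf).
  assert (Hincr : strictly_increasing_on (fun x => 0 <= x <= a) f)
    by (apply (strictly_increasing_on_segment f f'); intros x Hx; split; [apply Hf| apply Hf'_pos, Hx]).
  assert (Hdecr : strictly_decreasing_on (fun x => b <= x) f)
    by (apply (strictly_decreasing_on_half_line f f'); intros x Hx; split; [apply Hf| apply Hf'_neg, Hx]).
  destruct (hump_level_sets f a b Hab Hcont Hf0 Hpos Hincr Hdecr Hvanish)
    as (Tm & Tp & m & HTm & HTp & Hm & HfTm & HfTp & Hlevel).
  exists Tm, Tp, m. do 3 (split; [lra|]).
  split; [intros x y Hx Hy; apply Hincr; lra|].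
  split.
  { apply (diffeo_onto_of_strictly_monotone _ _ f f');
      [apply open_set_interval| apply open_set_interval| | | |].
    - intros x Hx. pose proof (Hf'_pos x ltac:(lra)). repeat split; [apply Hf| apply Hf'| lra].
    - left. intros x y Hx Hy. apply Hincr; lra.
    - intros x Hx. apply Hlevel; lra.
    - intros y Hy. rewrite <- HfTm in Hy. exact (hump_onto_initial f Hcont Hf0 Tm y ltac:(lra) Hy). }
  split; [intros x y Hx Hy; apply Hdecr; lra|].
  split; [|exact Hlevel].
  apply (diffeo_onto_of_strictly_monotone _ _ f f');
    [apply open_set_half_line| apply open_set_interval| | | |].
  - intros x Hx. pose proof (Hf'_neg x ltac:(lra)). repeat split; [apply Hf| apply Hf'| lra].
  - right. intros x y Hx Hy. apply Hdecr; lra.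
  - intros x Hx. apply Hlevel; lra.
  - intros y Hy. rewrite <- HfTp in Hy. exact (hump_onto_tail f Hcont Hvanish Tp y Hy).
Qed.

End Smooth_hump.

Lemma derive_unique_pos_half_line f g l m r :
  0 < r -> (forall t, 0 < t -> f t = g t) ->
  derivable_pt_lim f r l -> derivable_pt_lim g r m -> l = m.
Proof.
  intros Hr Efg Hf Hg. apply (uniqueness_limite g r); [|exact Hg].
  apply is_derive_Reals. apply is_derive_Reals in Hf.
  apply (is_derive_ext_loc f); [|exact Hf].
  apply (locally_interval _ r 0 p_infty); [exact Hr| exact I|].
  intros t Ht _. apply Efg, Ht.
Qed.

Lemma continuity_pt_of_ex_derive (f : R -> R) x : ex_derive f x -> continuity_pt f x.
Proof. intro H. apply continuity_pt_filterlim. exact (ex_derive_continuous f x H). Qed.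

Lemma limit1_in_ext f g D l x0 :
  (forall x, D x -> f x = g x) -> limit1_in f D l x0 -> limit1_in g D l x0.
Proof.
  intros Efg Hf eps Heps. destruct (Hf eps Heps) as [d [Hd Hfd]].
  exists d. split; [exact Hd|]. intros x Hx. rewrite <- Efg by apply Hx. apply Hfd, Hx.
Qed.

Lemma limit1_in_continuity_pt f D x0 :
  continuity_pt f x0 -> limit1_in f D (f x0) x0.
Proof.
  intros Hf eps Heps. destruct (Hf eps Heps) as [d [Hd Hfd]].
  exists d. split; [exact Hd|]. intros x [_ Hx].
  destruct (Req_dec x x0) as [->|Hne].
  - simpl. rewrite Rdist_eq. exact Heps.
  - apply Hfd. split; [split; [exact I| auto]| exact Hx].
Qed.

Lemma limit1_in_div_id_of_deriv f D l :
  (forall x, D x -> x <> 0) -> f 0 = 0 -> derivable_pt_lim f 0 l ->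
  limit1_in (fun x => f x / x) D l 0.
Proof.
  intros HD Hf0 Hf eps Heps. destruct (Hf eps Heps) as [d Hfd].
  exists d. split; [apply cond_pos|]. intros x [Hx Hxd].
  simpl in Hxd |- *. unfold Rdist in Hxd |- *. rewrite Rminus_0_r in Hxd.
  pose proof (Hfd x (HD x Hx) Hxd) as H. rewrite Rplus_0_l, Hf0, Rminus_0_r in H. exact H.
Qed.

Definition U_weight (z : R) : R := z ^ 2 - z ^ 4 / 3.
Definition U_slope (z : R) : R := (1 - z ^ 2) / 4.

Lemma U_weight_bounds z : 0 <= z <= 1 -> 0 <= U_weight z <= 1.
Proof. intros. unfold U_weight. assert (0 <= z ^ 2 <= 1) by nra. split; nra. Qed.

Lemma U_slope_bounds z : 0 <= z <= 1 -> 0 <= U_slope z <= 1 / 4.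
Proof. intros. unfold U_slope. assert (0 <= z ^ 2 <= 1) by nra. split; lra. Qed.

Lemma U_weight_integral : Rint U_weight 0 1 = 4 / 15.
Proof.
  rewrite (Rint_FTC Rle_0_1 U_weight (fun z => z ^ 3 / 3 - z ^ 5 / 15)).
  - field.
  - intros z _. unfold U_weight. reg.
  - intros z _. apply is_derive_Reals. unfold U_weight. auto_derive; [exact I| field].
Qed.

(* The integrand of 4 pi U(r) is kernel0 (U_weight z) (U_slope z) r, and
   kernel(k+1) n b is the derivative of kernel(k) n b. *)
Definition kernel0 (n b r : R) : R := n * r ^ 2 / (1 + b * r ^ 2).
Definition kernel1 (n b r : R) : R := 2 * n * r / (1 + b * r ^ 2) ^ 2.
Definition kernel2 (n b r : R) : R := 2 * n * (1 - 3 * b * r ^ 2) / (1 + b * r ^ 2) ^ 3.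
Definition kernel3 (n b r : R) : R := -24 * n * b * r * (1 - b * r ^ 2) / (1 + b * r ^ 2) ^ 4.

Lemma kernel_den_pos b r : 0 <= b -> 0 < 1 + b * r ^ 2.
Proof. intro Hb. pose proof (pow2_ge_0 r). nra. Qed.

Lemma derivable_pt_lim_kernel0 n b r : 0 <= b -> derivable_pt_lim (kernel0 n b) r (kernel1 n b r).
Proof.
  intro Hb. pose proof (kernel_den_pos b r Hb).
  apply is_derive_Reals. unfold kernel0, kernel1. auto_derive; [lra| field; lra].
Qed.

Lemma derivable_pt_lim_kernel1 n b r : 0 <= b -> derivable_pt_lim (kernel1 n b) r (kernel2 n b r).
Proof.
  intro Hb. pose proof (kernel_den_pos b r Hb).
  apply is_derive_Reals. unfold kernel1, kernel2. auto_derive; [nra| field; lra].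
Qed.

Lemma derivable_pt_lim_kernel2 n b r : 0 <= b -> derivable_pt_lim (kernel2 n b) r (kernel3 n b r).
Proof.
  intro Hb. pose proof (kernel_den_pos b r Hb).
  apply is_derive_Reals. unfold kernel2, kernel3. auto_derive; [nra| field; lra].
Qed.

Lemma Rabs_kernel2_le n b r :
  0 <= n <= 1 -> 0 <= b <= 1 / 4 -> Rabs (kernel2 n b r) <= 2 * (1 + r ^ 2).
Proof.
  intros Hn Hb. unfold kernel2. pose proof (pow2_ge_0 r).
  assert (0 <= b * r ^ 2 <= r ^ 2 / 4) by nra.
  apply Rabs_div_le_of_ge_1.
  - apply Rabs_le. split; nra.
  - rewrite <- (pow1 3). apply pow_incr. lra.
Qed.

Lemma Rabs_kernel3_le n b r :
  0 <= n <= 1 -> 0 <= b <= 1 / 4 -> Rabs (kernel3 n b r) <= 3 * (1 + r ^ 2) ^ 2.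
Proof.
  intros Hn Hb. unfold kernel3. pose proof (pow2_ge_0 r).
  assert (0 <= b * r ^ 2 <= r ^ 2 / 4) by nra.
  assert (Hr : Rabs r <= (1 + r ^ 2) / 2).
  { apply Rabs_le. pose proof (pow2_ge_0 (r - 1)). pose proof (pow2_ge_0 (r + 1)). split; nra. }
  apply Rabs_div_le_of_ge_1; [|rewrite <- (pow1 4); apply pow_incr; lra].
  replace (-24 * n * b * r * (1 - b * r ^ 2)) with ((24 * n * b) * (- (1 - b * r ^ 2)) * r) by ring.
  rewrite Rabs_mult, Rabs_mult, (Rabs_right (24 * n * b)) by nra.
  assert (Rabs (- (1 - b * r ^ 2)) <= 1 + r ^ 2) by (apply Rabs_le; split; nra).
  pose proof (Rabs_pos r). pose proof (Rabs_pos (- (1 - b * r ^ 2))).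
  apply Rle_trans with (6 * (1 + r ^ 2) * ((1 + r ^ 2) / 2)); [|nra].
  apply Rmult_le_compat; [apply Rmult_le_pos; nra| lra| |lra].
  apply Rmult_le_compat; [nra| lra| nra| lra].
Qed.

Lemma U_slope_den_pos z r : 0 <= z <= 1 -> 0 < 1 + U_slope z * r ^ 2.
Proof. intro Hz. apply kernel_den_pos, U_slope_bounds, Hz. Qed.

Definition V0 (r : R) : R := Rint (fun z => kernel0 (U_weight z) (U_slope z) r) 0 1.
Definition V1 (r : R) : R := Rint (fun z => kernel1 (U_weight z) (U_slope z) r) 0 1.
Definition V2 (r : R) : R := Rint (fun z => kernel2 (U_weight z) (U_slope z) r) 0 1.

Lemma continuous_kernel0 r :
  continuous_on_segment 0 1 (fun z => kernel0 (U_weight z) (U_slope z) r).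
Proof.
  intros z Hz. apply continuity_pt_of_ex_derive. pose proof (U_slope_den_pos z r Hz).
  unfold kernel0, U_weight, U_slope in *. auto_derive. lra.
Qed.

Lemma continuous_kernel1 r :
  continuous_on_segment 0 1 (fun z => kernel1 (U_weight z) (U_slope z) r).
Proof.
  intros z Hz. apply continuity_pt_of_ex_derive. pose proof (U_slope_den_pos z r Hz).
  unfold kernel1, U_weight, U_slope in *. auto_derive. apply Rgt_not_eq; repeat apply Rmult_lt_0_compat; lra.
Qed.

Lemma continuous_kernel2 r :
  continuous_on_segment 0 1 (fun z => kernel2 (U_weight z) (U_slope z) r).
Proof.
  intros z Hz. apply continuity_pt_of_ex_derive. pose proof (U_slope_den_pos z r Hz).
  unfold kernel2, U_weight, U_slope in *. auto_derive. apply Rgt_not_eq; repeat apply Rmult_lt_0_compat; lra.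
Qed.

Lemma kernel1_lipschitz n b r0 r :
  0 <= n <= 1 -> 0 <= b <= 1 / 4 -> Rabs (r - r0) <= 1 ->
  Rabs (kernel1 n b r - kernel1 n b r0) <= 2 * (1 + (Rabs r0 + 1) ^ 2) * Rabs (r - r0).
Proof.
  intros Hn Hb.
  apply (Rabs_sub_le_of_deriv_bound (kernel1 n b) (kernel2 n b)).
  - intros t _. apply derivable_pt_lim_kernel1. lra.
  - intros t Ht. apply Rle_trans with (1 := Rabs_kernel2_le n b t Hn Hb).
    pose proof (one_plus_sqr_le_near t r0 Ht). lra.
Qed.

Lemma kernel2_lipschitz n b r0 r :
  0 <= n <= 1 -> 0 <= b <= 1 / 4 -> Rabs (r - r0) <= 1 ->
  Rabs (kernel2 n b r - kernel2 n b r0) <= 3 * (1 + (Rabs r0 + 1) ^ 2) ^ 2 * Rabs (r - r0).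
Proof.
  intros Hn Hb.
  apply (Rabs_sub_le_of_deriv_bound (kernel2 n b) (kernel3 n b)).
  - intros t _. apply derivable_pt_lim_kernel2. lra.
  - intros t Ht. apply Rle_trans with (1 := Rabs_kernel3_le n b t Hn Hb).
    pose proof (one_plus_sqr_le_near t r0 Ht). pose proof (pow2_ge_0 t).
    apply Rmult_le_compat_l; [lra|]. apply pow_incr. lra.
Qed.

Lemma derivable_pt_lim_V0 r : derivable_pt_lim V0 r (V1 r).
Proof.
  apply (derivable_pt_lim_Rint_param Rle_0_1
           (fun r z => kernel0 (U_weight z) (U_slope z) r) (fun r z => kernel1 (U_weight z) (U_slope z) r)
           r 1 (2 * (1 + (Rabs r + 1) ^ 2)));
    [lra| pose proof (pow2_ge_0 (Rabs r + 1)); lra| apply continuous_kernel0| apply continuous_kernel1| |].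
  - intros z Hz t _. apply derivable_pt_lim_kernel0, U_slope_bounds, Hz.
  - intros z Hz t Ht. apply kernel1_lipschitz; [apply U_weight_bounds| apply U_slope_bounds|]; assumption.
Qed.

Lemma continuity_pt_V0 r : continuity_pt V0 r.
Proof. apply derivable_continuous_pt. exists (V1 r). apply derivable_pt_lim_V0. Qed.

Lemma derivable_pt_lim_V1 r : derivable_pt_lim V1 r (V2 r).
Proof.
  apply (derivable_pt_lim_Rint_param Rle_0_1
           (fun r z => kernel1 (U_weight z) (U_slope z) r) (fun r z => kernel2 (U_weight z) (U_slope z) r)
           r 1 (3 * (1 + (Rabs r + 1) ^ 2) ^ 2));
    [lra| pose proof (pow2_ge_0 (1 + (Rabs r + 1) ^ 2)); lra| apply continuous_kernel1| apply continuous_kernel2| |].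
  - intros z Hz t _. apply derivable_pt_lim_kernel1, U_slope_bounds, Hz.
  - intros z Hz t Ht. apply kernel2_lipschitz; [apply U_weight_bounds| apply U_slope_bounds|]; assumption.
Qed.

Lemma continuity_pt_V2 r : continuity_pt V2 r.
Proof.
  apply (continuity_pt_Rint_param Rle_0_1 (fun r z => kernel2 (U_weight z) (U_slope z) r) r 1 (3 * (1 + (Rabs r + 1) ^ 2) ^ 2));
    [lra| pose proof (pow2_ge_0 (1 + (Rabs r + 1) ^ 2)); lra| apply continuous_kernel2|].
  intros z Hz t Ht. apply kernel2_lipschitz; [apply U_weight_bounds| apply U_slope_bounds|]; assumption.
Qed.

Lemma continuous_U_integrand r : continuous_on_segment 0 1 (U_integrand r).
Proof.
  intros z Hz. apply continuity_pt_of_ex_derive. pose proof (U_slope_den_pos z r Hz).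
  unfold U_integrand, U_slope in *. auto_derive. lra.
Qed.

Lemma kernel0_U_integrand r z :
  0 <= z <= 1 -> kernel0 (U_weight z) (U_slope z) r = r ^ 2 * U_integrand r z.
Proof.
  intro Hz. pose proof (U_slope_den_pos z r Hz).
  unfold kernel0, U_integrand, U_weight, U_slope in *. field. lra.
Qed.

Lemma U_eq r : U r = V0 r / (4 * PI).
Proof.
  pose proof PI_RGT_0.
  unfold U, V0.
  rewrite (Rint_ext Rle_0_1 _ (fun z => r ^ 2 * U_integrand r z) (continuous_kernel0 r)
             (kernel0_U_integrand r)), (Rint_scal Rle_0_1) by apply continuous_U_integrand.
  field. lra.
Qed.

Lemma derivable_pt_lim_U r : derivable_pt_lim U r (V1 r / (4 * PI)).
Proof.
  replace (V1 r / (4 * PI)) with (/ (4 * PI) * V1 r) by (unfold Rdiv; ring).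
  apply is_derive_Reals, (is_derive_ext (fun t => / (4 * PI) * V0 t));
    [intro t; rewrite U_eq; apply Rmult_comm|].
  apply is_derive_Reals, (derivable_pt_lim_scal V0), derivable_pt_lim_V0.
Qed.

Lemma U'_eq r : U' r = V1 r / (4 * PI).
Proof.
  unfold U'. apply (uniqueness_limite U r); [|apply derivable_pt_lim_U].
  exact (epsilon_spec (inhabits 0) (derivable_pt_lim U r) (ex_intro _ _ (derivable_pt_lim_U r))).
Qed.

Lemma kernel0_nonneg n b r : 0 <= n -> 0 <= b -> 0 <= kernel0 n b r.
Proof.
  intros Hn Hb. unfold kernel0. pose proof (pow2_ge_0 r). pose proof (kernel_den_pos b r Hb).
  apply Rmult_le_pos; [nra|]. apply Rlt_le, Rinv_0_lt_compat. lra.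
Qed.

Lemma V0_nonneg r : 0 <= V0 r.
Proof.
  apply Rle_trans with (Rint (fun _ => 0) 0 1); [rewrite (Rint_const Rle_0_1); lra|].
  apply (Rint_le Rle_0_1); [apply continuous_on_segment_const| apply continuous_kernel0|].
  intros z Hz. apply kernel0_nonneg; [apply U_weight_bounds| apply U_slope_bounds]; exact Hz.
Qed.

Lemma Phi_den_pos r : 0 < 4 * PI + V0 r.
Proof. pose proof PI_RGT_0. pose proof (V0_nonneg r). lra. Qed.

Lemma Phi_eq r : Phi r = V1 r / (4 * PI + V0 r).
Proof.
  pose proof PI_RGT_0. pose proof (V0_nonneg r).
  unfold Phi. rewrite U'_eq, U_eq. field. lra.
Qed.

Definition Phi_deriv (r : R) : R := V2 r / (4 * PI + V0 r) - Phi r * Phi r.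

Lemma derivable_pt_lim_Phi r : derivable_pt_lim Phi r (Phi_deriv r).
Proof.
  pose proof (Phi_den_pos r) as Hden.
  assert (HdD : derivable_pt_lim (fun t => 4 * PI + V0 t) r (V1 r)).
  { replace (V1 r) with (0 + V1 r) by ring.
    apply (derivable_pt_lim_plus (fun _ => 4 * PI) V0);
      [apply derivable_pt_lim_const| apply derivable_pt_lim_V0]. }
  replace (Phi_deriv r)
    with ((V2 r * (4 * PI + V0 r) - V1 r * V1 r) / (4 * PI + V0 r) ^ 2)
    by (unfold Phi_deriv; rewrite Phi_eq; field; lra).
  apply is_derive_Reals, (is_derive_ext (fun t => V1 t / (4 * PI + V0 t)));
    [intro t; symmetry; apply Phi_eq|].
  apply (is_derive_div V1 (fun t => 4 * PI + V0 t)); [apply is_derive_Reals, derivable_pt_lim_V1| apply is_derive_Reals, HdD| lra].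
Qed.

Lemma continuity_pt_Phi r : continuity_pt Phi r.
Proof. apply derivable_continuous_pt. exists (Phi_deriv r). apply derivable_pt_lim_Phi. Qed.

Lemma continuity_pt_Phi_deriv r : continuity_pt Phi_deriv r.
Proof.
  unfold Phi_deriv.
  apply (continuity_pt_minus (fun t => V2 t / (4 * PI + V0 t)) (fun t => Phi t * Phi t));
    [| apply continuity_pt_mult; apply continuity_pt_Phi].
  apply continuity_pt_div; [apply continuity_pt_V2| |pose proof (Phi_den_pos r); lra].
  apply (continuity_pt_plus (fun _ => 4 * PI) V0); [|apply continuity_pt_V0].
  apply continuity_pt_const. intros ? ?; reflexivity.
Qed.

Lemma V0_0 : V0 0 = 0.
Proof.
  unfold V0. rewrite (Rint_ext Rle_0_1 _ (fun _ => 0)), (Rint_const Rle_0_1); [ring| apply continuous_kernel0|].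
  intros z _. unfold kernel0. field.
Qed.

Lemma V1_0 : V1 0 = 0.
Proof.
  unfold V1. rewrite (Rint_ext Rle_0_1 _ (fun _ => 0)), (Rint_const Rle_0_1); [ring| apply continuous_kernel1|].
  intros z _. unfold kernel1. field.
Qed.

Lemma V2_0 : V2 0 = 8 / 15.
Proof.
  unfold V2. rewrite (Rint_ext Rle_0_1 _ (fun z => 2 * U_weight z)), (Rint_scal Rle_0_1), U_weight_integral.
  - field.
  - intros z _. unfold U_weight. reg.
  - apply continuous_kernel2.
  - intros z _. unfold kernel2. field.
Qed.

Lemma Phi_0 : Phi 0 = 0.
Proof. rewrite Phi_eq, V1_0. unfold Rdiv. ring. Qed.

Lemma Phi_deriv_0 : Phi_deriv 0 = 2 / (15 * PI).
Proof. pose proof PI_RGT_0. unfold Phi_deriv. rewrite Phi_0, V0_0, V2_0. field. lra. Qed.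

Lemma Phi_deriv_pos_near_0 : exists a, 0 < a <= 1 /\ forall x, 0 <= x <= a -> 0 < Phi_deriv x.
Proof.
  assert (H0 : 0 < Phi_deriv 0)
    by (rewrite Phi_deriv_0; apply Rdiv_lt_0_compat; pose proof PI_RGT_0; lra).
  destruct (continuity_pt_Phi_deriv 0 (Phi_deriv 0) H0) as [d [Hd Hnear]].
  exists (Rmin (d / 2) 1). split.
  { split; [apply Rmin_glb_lt; lra| apply Rmin_r]. }
  intros x Hx. pose proof (Rmin_l (d / 2) 1).
  destruct (Req_dec x 0) as [->|Hx0]; [exact H0|].
  assert (Hdist : Rabs (Phi_deriv x - Phi_deriv 0) < Phi_deriv 0).
  { apply (Hnear x). split; [split; [exact I| auto]|].
    simpl. unfold Rdist. rewrite Rminus_0_r, Rabs_right; lra. }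
  apply Rabs_def2 in Hdist. lra.
Qed.

Lemma kernel1_lower_bound n b r :
  0 <= n -> 0 <= b <= 1 -> 0 <= r -> 2 * r / (1 + r ^ 2) ^ 2 * n <= kernel1 n b r.
Proof.
  intros Hn Hb Hr. unfold kernel1. pose proof (pow2_ge_0 r).
  assert (Hden : 1 <= 1 + b * r ^ 2 <= 1 + r ^ 2) by nra.
  replace (2 * r / (1 + r ^ 2) ^ 2 * n) with (2 * n * r * / (1 + r ^ 2) ^ 2) by (unfold Rdiv; ring).
  apply Rmult_le_compat_l; [nra|].
  apply Rinv_le_contravar; [apply pow_lt; lra| apply pow_incr; lra].
Qed.

Lemma V1_pos r : 0 < r -> 0 < V1 r.
Proof.
  intro Hr. pose proof (pow2_ge_0 r).
  assert (Hc : 0 < 2 * r / (1 + r ^ 2) ^ 2) by (apply Rdiv_lt_0_compat; [lra| apply pow_lt; lra]).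
  apply Rlt_le_trans with (Rint (fun z => 2 * r / (1 + r ^ 2) ^ 2 * U_weight z) 0 1).
  - rewrite (Rint_scal Rle_0_1), U_weight_integral by (intros z _; unfold U_weight; reg). lra.
  - apply (Rint_le Rle_0_1); [intros z _; unfold U_weight; reg| apply continuous_kernel1|].
    intros z Hz. pose proof (U_slope_bounds z Hz).
    apply kernel1_lower_bound; [apply U_weight_bounds, Hz| lra| lra].
Qed.

Lemma Phi_pos r : 0 < r -> 0 < Phi r.
Proof.
  intro Hr. rewrite Phi_eq. apply Rdiv_lt_0_compat; [apply V1_pos, Hr| apply Phi_den_pos].
Qed.

Lemma Phi_equiv_at_0 : limit1_in (fun r => Phi r / (2 * r / (15 * PI))) (fun r => 0 < r) 1 0.
Proof.
  pose proof PI_RGT_0.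
  apply (limit1_in_ext (fun r => V1 r / r * (15 * PI / (2 * (4 * PI + V0 r))))).
  { intros r Hr. pose proof (Phi_den_pos r). rewrite Phi_eq. field. repeat split; lra. }
  replace 1 with (V2 0 * (15 * PI / (2 * (4 * PI + V0 0)))) by (rewrite V2_0, V0_0; field; lra).
  apply limit_mul.
  - apply limit1_in_div_id_of_deriv; [intros; lra| apply V1_0| apply derivable_pt_lim_V1].
  - apply (limit1_in_continuity_pt (fun r => 15 * PI / (2 * (4 * PI + V0 r)))).
    apply continuity_pt_div; [apply continuity_pt_const; intros ? ?; reflexivity| |
      pose proof (Phi_den_pos 0); lra].
    apply continuity_pt_scal, (continuity_pt_plus (fun _ => 4 * PI) V0);
      [apply continuity_pt_const; intros ? ?; reflexivity| apply continuity_pt_V0].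
Qed.

Definition arsinh_half (r : R) : R := ln (r + sqrt (4 + r ^ 2)) - ln 2.

Definition G0 (r : R) : R :=
  4 / r ^ 2 - 5 / 3 + (2 * r ^ 2 - 4) * sqrt (4 + r ^ 2) * arsinh_half r / r ^ 3.
Definition G1 (r : R) : R :=
  2 / r - 12 / r ^ 3 + 48 * arsinh_half r / (r ^ 4 * sqrt (4 + r ^ 2)).
Definition G2 (r : R) : R :=
  -2 / r ^ 2 + 36 / r ^ 4 + 48 / (r ^ 4 * (4 + r ^ 2))
  - 48 * arsinh_half r * (4 / (r ^ 5 * sqrt (4 + r ^ 2)) + 1 / (r ^ 3 * sqrt (4 + r ^ 2) ^ 3)).

Lemma sqrt_4_plus_sqr r :
  0 <= r -> 0 < sqrt (4 + r ^ 2) /\ sqrt (4 + r ^ 2) * sqrt (4 + r ^ 2) = 4 + r ^ 2 /\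
  r < sqrt (4 + r ^ 2).
Proof.
  intro Hr. pose proof (pow2_ge_0 r).
  pose proof (sqrt_lt_R0 (4 + r ^ 2) ltac:(lra)). pose proof (sqrt_sqrt (4 + r ^ 2) ltac:(lra)).
  repeat split; nra.
Qed.

Lemma pow_SS_of_sqr s c n : s * s = c -> s ^ S (S n) = s ^ n * c.
Proof. intros <-. simpl. ring. Qed.

Lemma V0_closed r : 0 < r -> V0 r = 4 / 3 * G0 r.
Proof.
  intro Hr. pose proof (pow_lt r 2 Hr).
  destruct (sqrt_4_plus_sqr r ltac:(lra)) as [Hs0 [Hss Hsr]].
  set (s := sqrt (4 + r ^ 2)) in *.
  (* Partial fractions in z: 1 + U_slope z * r^2 = (s - r z) (s + r z) / 4. *)
  set (k := -2 * (4 + r ^ 2) * (4 - 2 * r ^ 2) / (3 * r ^ 3 * s)).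
  unfold V0.
  rewrite (Rint_FTC Rle_0_1 _ (fun z => 4 / 9 * z ^ 3 + (16 - 8 * r ^ 2) / (3 * r ^ 2) * z
            + k * (ln (s + r * z) - ln (s - r * z)))).
  - assert (Hln : ln (s - r) = 2 * ln 2 - ln (s + r)).
    { assert (E : ln ((s - r) * (s + r)) = ln (2 * 2)) by (f_equal; nra).
      rewrite ln_mult, ln_mult in E by lra. lra. }
    replace (r * 1) with r by ring. replace (r * 0) with 0 by ring.
    rewrite Rminus_0_r, Rplus_0_r, Hln.
    unfold G0, arsinh_half. fold s. rewrite (Rplus_comm r s).
    unfold k. field_simplify_eq; [| repeat split; lra].
    rewrite ?(pow_SS_of_sqr s _ _ Hss). ring.
  - apply continuous_kernel0.
  - intros z Hz. assert (0 < s + r * z) by nra. assert (0 < s - r * z) by nra.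
    pose proof (U_slope_den_pos z r Hz).
    apply is_derive_Reals. unfold kernel0, U_weight, U_slope, k in *.
    auto_derive; [repeat split; lra|].
    field_simplify_eq; [| repeat split; lra].
    rewrite ?(pow_SS_of_sqr s _ _ Hss). ring.
Qed.

Ltac positivity := repeat (apply Rmult_lt_0_compat || apply Rplus_lt_0_compat || apply pow_lt);
  try assumption; try lra.

Lemma derivable_pt_lim_G0 r : 0 < r -> derivable_pt_lim G0 r (G1 r).
Proof.
  intro Hr. pose proof (pow_lt r 2 Hr). destruct (sqrt_4_plus_sqr r ltac:(lra)) as [Hs0 [Hss Hsr]].
  apply is_derive_Reals. unfold G0, G1, arsinh_half.
  auto_derive; replace (r * (r * 1)) with (r ^ 2) by ring.
  - repeat split; try exact I; try apply Rgt_not_eq; positivity.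
  - set (s := sqrt (4 + r ^ 2)) in *. field_simplify_eq; [| repeat split; nra].
    rewrite ?(pow_SS_of_sqr s _ _ Hss). ring.
Qed.

Lemma derivable_pt_lim_G1 r : 0 < r -> derivable_pt_lim G1 r (G2 r).
Proof.
  intro Hr. pose proof (pow_lt r 2 Hr). destruct (sqrt_4_plus_sqr r ltac:(lra)) as [Hs0 [Hss Hsr]].
  apply is_derive_Reals. unfold G1, G2, arsinh_half.
  auto_derive; replace (r * (r * 1)) with (r ^ 2) by ring.
  - repeat split; try exact I; try apply Rgt_not_eq; positivity.
  - set (s := sqrt (4 + r ^ 2)) in *. field_simplify_eq; [| repeat split; nra].
    rewrite ?(pow_SS_of_sqr s _ _ Hss). ring.
Qed.

Lemma V1_closed r : 0 < r -> V1 r = 4 / 3 * G1 r.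
Proof.
  intro Hr. apply (derive_unique_pos_half_line V0 (fun t => 4 / 3 * G0 t) _ _ r Hr V0_closed);
    [apply derivable_pt_lim_V0|].
  apply (derivable_pt_lim_scal G0), derivable_pt_lim_G0, Hr.
Qed.

Lemma V2_closed r : 0 < r -> V2 r = 4 / 3 * G2 r.
Proof.
  intro Hr. apply (derive_unique_pos_half_line V1 (fun t => 4 / 3 * G1 t) _ _ r Hr V1_closed);
    [apply derivable_pt_lim_V1|].
  apply (derivable_pt_lim_scal G1), derivable_pt_lim_G1, Hr.
Qed.

Lemma Phi_closed r : 0 < r -> Phi r = G1 r / (3 * PI + G0 r).
Proof.
  intro Hr. pose proof PI_RGT_0. pose proof (Phi_den_pos r) as Hden.
  rewrite V0_closed in Hden by exact Hr.
  rewrite Phi_eq, V0_closed, V1_closed by exact Hr. field. lra.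
Qed.

Lemma arsinh_half_pos r : 0 < r -> 0 < arsinh_half r.
Proof.
  intro Hr. destruct (sqrt_4_plus_sqr r ltac:(lra)) as [Hs0 [Hss Hsr]].
  pose proof (pow_lt r 2 Hr). assert (2 < sqrt (4 + r ^ 2)) by nra.
  pose proof (ln_increasing 2 (r + sqrt (4 + r ^ 2)) ltac:(lra) ltac:(lra)).
  unfold arsinh_half. lra.
Qed.

Lemma G2_neg r : 5 <= r -> G2 r < 0.
Proof.
  intro Hr. destruct (sqrt_4_plus_sqr r ltac:(lra)) as [Hs0 [Hss Hsr]].
  pose proof (arsinh_half_pos r ltac:(lra)).
  assert (Hr2 : 25 <= r ^ 2) by nra.
  set (s := sqrt (4 + r ^ 2)) in *. unfold G2. fold s.
  assert (0 <= 48 * arsinh_half r * (4 / (r ^ 5 * s) + 1 / (r ^ 3 * s ^ 3))).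
  { apply Rmult_le_pos; [lra|].
    apply Rplus_le_le_0_compat; left; apply Rdiv_lt_0_compat; positivity. }
  assert (-2 / r ^ 2 + 36 / r ^ 4 + 48 / (r ^ 4 * (4 + r ^ 2)) < 0).
  { replace (-2 / r ^ 2 + 36 / r ^ 4 + 48 / (r ^ 4 * (4 + r ^ 2)))
      with ((-2 * r ^ 2 * (4 + r ^ 2) + 36 * (4 + r ^ 2) + 48) / (r ^ 4 * (4 + r ^ 2)))
      by (field; split; lra).
    apply Rdiv_neg_pos; [nra| positivity]. }
  lra.
Qed.

Lemma Phi_deriv_neg r : 5 <= r -> Phi_deriv r < 0.
Proof.
  intro Hr. unfold Phi_deriv. rewrite V2_closed by lra.
  pose proof (G2_neg r Hr). pose proof (Phi_den_pos r).
  assert (4 / 3 * G2 r / (4 * PI + V0 r) < 0) by (apply Rdiv_neg_pos; lra).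
  nra.
Qed.

Lemma sqrt_4_plus_sqr_le r : 0 < r -> sqrt (4 + r ^ 2) <= r + 2 / r.
Proof.
  intro Hr. destruct (sqrt_4_plus_sqr r ltac:(lra)) as [Hs0 [Hss _]].
  assert (H2r : 0 < 2 / r) by (apply Rdiv_lt_0_compat; lra).
  assert ((r + 2 / r) * (r + 2 / r) = 4 + r ^ 2 + 4 / r ^ 2) by (field; lra).
  assert (0 < 4 / r ^ 2) by (apply Rdiv_lt_0_compat; [lra| apply pow_lt; lra]).
  nra.
Qed.

Lemma arsinh_half_bounds r : 3 <= r -> ln r <= arsinh_half r <= ln r + 1.
Proof.
  intro Hr. destruct (sqrt_4_plus_sqr r ltac:(lra)) as [Hs0 [Hss Hsr]].
  pose proof (sqrt_4_plus_sqr_le r ltac:(lra)).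
  assert (2 / r <= r) by (apply Rmult_le_reg_r with r; [lra|]; unfold Rdiv;
                          rewrite Rmult_assoc, Rinv_l, Rmult_1_r by lra; nra).
  pose proof (exp_ineq1 1 (Rgt_not_eq 1 0 Rlt_0_1)). pose proof (exp_pos 1).
  unfold arsinh_half. split.
  - assert (ln (2 * r) < ln (r + sqrt (4 + r ^ 2))) by (apply ln_increasing; lra).
    rewrite ln_mult in * by lra. lra.
  - assert (ln (r + sqrt (4 + r ^ 2)) <= ln (2 * exp 1 * r)).
    { apply Rlt_le, ln_increasing; nra. }
    rewrite !ln_mult, ln_exp in * by lra. lra.
Qed.

Lemma G1_asymptotic r : 3 <= r -> Rabs (r * G1 r - 2) <= 108 / r.
Proof.
  intro Hr. destruct (sqrt_4_plus_sqr r ltac:(lra)) as [Hs0 [Hss Hsr]].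
  pose proof (sqrt_4_plus_sqr_le r ltac:(lra)).
  pose proof (arsinh_half_bounds r Hr). pose proof (ln_lt_id r ltac:(lra)).
  assert (0 < ln r) by (rewrite <- ln_1; apply ln_increasing; lra).
  set (s := sqrt (4 + r ^ 2)) in *. set (L := arsinh_half r) in *.
  unfold G1. fold s L.
  replace (r * (2 / r - 12 / r ^ 3 + 48 * L / (r ^ 4 * s)) - 2)
    with (- (12 / r ^ 2) + 48 * L / (r ^ 3 * s)) by (field; lra).
  assert (0 <= 12 / r ^ 2 <= 12 / r).
  { split; [apply Rlt_le, Rdiv_lt_0_compat; [lra| apply pow_lt; lra]|].
    apply Rmult_le_compat_l; [lra|]. apply Rinv_le_contravar; [lra| nra]. }
  assert (0 <= 48 * L / (r ^ 3 * s) <= 96 / r).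
  { split; [apply Rlt_le, Rdiv_lt_0_compat; [lra| apply Rmult_lt_0_compat; [apply pow_lt|]; lra]|].
    apply Rmult_le_reg_r with (r ^ 3 * s); [apply Rmult_lt_0_compat; [apply pow_lt|]; lra|].
    unfold Rdiv. rewrite Rmult_assoc, Rinv_l, Rmult_1_r by (apply Rgt_not_eq, Rmult_lt_0_compat; [apply pow_lt|]; lra).
    replace (96 * / r * (r ^ 3 * s)) with (96 * r ^ 2 * s) by (field; lra).
    nra. }
  apply Rabs_le. lra.
Qed.

Lemma G0_asymptotic r : 3 <= r -> Rabs (G0 r - 2 * ln r) <= 6.
Proof.
  intro Hr. destruct (sqrt_4_plus_sqr r ltac:(lra)) as [Hs0 [Hss Hsr]].
  pose proof (sqrt_4_plus_sqr_le r ltac:(lra)).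
  pose proof (arsinh_half_bounds r Hr). pose proof (ln_lt_id r ltac:(lra)).
  assert (0 < ln r) by (rewrite <- ln_1; apply ln_increasing; lra).
  assert (Hr3 : 0 < r ^ 3) by (apply pow_lt; lra).
  set (s := sqrt (4 + r ^ 2)) in *. set (L := arsinh_half r) in *. set (l := ln r) in *.
  unfold G0. fold s L.
  assert (0 <= 4 / r ^ 2 <= 1).
  { split; [apply Rlt_le, Rdiv_lt_0_compat; [lra| apply pow_lt; lra]|].
    apply Rdiv_le_of_le_mul; [apply pow_lt; lra| nra]. }
  assert (2 * l - 4 <= (2 * r ^ 2 - 4) * s * L / r ^ 3 <= 2 * l + 5).
  { assert (0 <= 2 * r ^ 2 - 4) by nra.
    split.
    - apply Rle_div_of_mul_le; [exact Hr3|].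
      assert ((2 * r ^ 2 - 4) * r * l <= (2 * r ^ 2 - 4) * s * L)
        by (apply Rmult_le_compat; nra).
      nra.
    - apply Rdiv_le_of_le_mul; [exact Hr3|].
      assert (Hup : (2 * r ^ 2 - 4) * s * L <= 2 * r ^ 2 * (r + 2 / r) * (l + 1))
        by (apply Rmult_le_compat; nra).
      replace (2 * r ^ 2 * (r + 2 / r) * (l + 1)) with ((2 * r ^ 3 + 4 * r) * (l + 1)) in Hup
        by (field; lra).
      nra. }
  apply Rabs_le. lra.
Qed.

(* Phi r (r ln r) - 1 = ((r G1 r - 2) ln r - 3 pi - (G0 r - 2 ln r)) / (3 pi + G0 r), whose
   numerator is bounded by 126 and whose denominator exceeds 2 ln r - 6. *)
Lemma Phi_equiv_at_infinity : forall eps, 0 < eps -> exists M, forall r, M < r ->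
  Rabs (Phi r * (r * ln r) - 1) < eps.
Proof.
  intros eps Heps.
  exists (Rmax 3 (exp (63 / eps + 3))). intros r Hr.
  pose proof (Rmax_l 3 (exp (63 / eps + 3))) as Hr3.
  pose proof (Rmax_r 3 (exp (63 / eps + 3))) as Hrexp.
  assert (Hl : 63 / eps + 3 < ln r).
  { rewrite <- (ln_exp (63 / eps + 3)). apply ln_increasing; [apply exp_pos| lra]. }
  pose proof (G1_asymptotic r ltac:(lra)) as HG1. pose proof (G0_asymptotic r ltac:(lra)) as HG0.
  apply Rabs_le_between in HG1, HG0.
  pose proof PI_RGT_0. pose proof PI_4. pose proof (ln_lt_id r ltac:(lra)).
  assert (He : 0 < 63 / eps) by (apply Rdiv_lt_0_compat; lra).
  assert (Hden : 126 / eps < 3 * PI + G0 r)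
    by (replace (126 / eps) with (2 * (63 / eps)) by (field; lra); lra).
  assert (Hnum : Rabs ((r * G1 r - 2) * ln r - 3 * PI - (G0 r - 2 * ln r)) <= 126).
  { assert (108 / r * ln r <= 108)
      by (replace (108 / r * ln r) with (108 * ln r / r) by (field; lra);
          apply Rdiv_le_of_le_mul; lra).
    apply Rabs_le. split; nra. }
  rewrite Phi_closed by lra.
  replace (G1 r / (3 * PI + G0 r) * (r * ln r) - 1)
    with (((r * G1 r - 2) * ln r - 3 * PI - (G0 r - 2 * ln r)) / (3 * PI + G0 r))
    by (field; lra).
  assert (Hdp : 0 < 3 * PI + G0 r) by (pose proof (Rdiv_lt_0_compat 126 eps ltac:(lra) Heps); lra).
  rewrite Rabs_div, (Rabs_right (3 * PI + G0 r)) by lra.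
  apply Rle_lt_trans with (126 / (3 * PI + G0 r)); [apply Rmult_le_compat_r; [apply Rlt_le, Rinv_0_lt_compat|]; lra|].
  apply Rmult_lt_reg_r with (3 * PI + G0 r); [lra|].
  unfold Rdiv. rewrite Rmult_assoc, Rinv_l, Rmult_1_r by lra.
  apply Rmult_lt_compat_r with (r := eps) in Hden; [|lra].
  unfold Rdiv in Hden. rewrite Rmult_assoc, Rinv_l, Rmult_1_r in Hden by lra. lra.
Qed.

Lemma Phi_vanishes_at_infinity y T : 0 < y -> exists r, T < r /\ Phi r < y.
Proof.
  intro Hy. destruct (Phi_equiv_at_infinity 1 Rlt_0_1) as [M HM].
  set (r := Rmax (Rmax M T) (Rmax (exp 1) (2 / y)) + 1).
  pose proof (Rmax_l (Rmax M T) (Rmax (exp 1) (2 / y))).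
  pose proof (Rmax_r (Rmax M T) (Rmax (exp 1) (2 / y))).
  pose proof (Rmax_l M T). pose proof (Rmax_r M T).
  pose proof (Rmax_l (exp 1) (2 / y)). pose proof (Rmax_r (exp 1) (2 / y)).
  pose proof (exp_pos 1). pose proof (Rdiv_lt_0_compat 2 y ltac:(lra) Hy).
  exists r. split; [unfold r; lra|].
  assert (Hlr : 1 < ln r) by (rewrite <- (ln_exp 1); apply ln_increasing; unfold r; lra).
  pose proof (Phi_pos r ltac:(unfold r; lra)).
  specialize (HM r ltac:(unfold r; lra)). apply Rabs_def2 in HM.
  assert (Phi r * r < 2) by nra.
  assert (2 < y * r).
  { replace 2 with (y * (2 / y)) by (field; lra). apply Rmult_lt_compat_l; [lra| unfold r; lra]. }
  nra.
Qed.

Theorem lemma9 :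
  exists Tm Tp Phi0 : R,
    0 < Tm /\ Tm < Tp /\ 0 < Phi0 /\
    strictly_increasing_on (fun r => 0 < r < Tm) Phi /\
    diffeo_onto (fun r => 0 < r < Tm) (fun y => 0 < y < Phi0) Phi /\
    strictly_decreasing_on (fun r => Tp < r) Phi /\
    diffeo_onto (fun r => Tp < r) (fun y => 0 < y < Phi0) Phi /\
    (forall r, 0 <= r -> (0 < Phi r < Phi0 <-> (0 < r < Tm \/ Tp < r))) /\
    limit1_in (fun r => Phi r / (2 * r / (15 * PI))) (fun r => 0 < r) 1 0 /\
    (forall eps, 0 < eps -> exists M, forall r, M < r ->
        Rabs (Phi r * (r * ln r) - 1) < eps).
Proof.
  destruct Phi_deriv_pos_near_0 as [a [Ha HPhi'_pos]].
  destruct (smooth_hump_shape Phi Phi_deriv a 5 ltac:(lra) derivable_pt_lim_Phi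
              continuity_pt_Phi_deriv Phi_0 Phi_pos HPhi'_pos Phi_deriv_neg Phi_vanishes_at_infinity)
    as (Tm & Tp & m & Hshape).
  exists Tm, Tp, m.
  pose proof Phi_equiv_at_0. pose proof Phi_equiv_at_infinity. tauto.
Qed.
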